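(* Let $m$ and $n$ be positive integers divisible by $4$, and let $t\ge 2$ and $r\ge 1$ be integers. Then (i) $\gamma_{tR}(C_m\times C_n)=\frac{mn}{2}$; (ii) $\gamma_{tR}(C_m\times K_{t,t})=2m$; (iii) $\gamma_{tR}(C_m\times P_{C_{3r}})=2mr$; (iv) $\gamma_{tR}(K_{t,t}\times P_{C_{3r}})=8r$.
   Context: $C_k$ is the cycle on $k$ vertices. The prism $P_{C_{3r}}$ over $C_{3r}$ is the Cartesian product $C_{3r}\,\Box\,K_2$ (two disjoint copies of $C_{3r}$ with a perfect matching joining corresponding vertices). A total Roman dominating function on a graph $X$ without isolated vertices is a map $f:V(X)\to\{0,1,2\}$ such that every vertex with label 0 has a neighbor with label 2 and the subgraph induced by vertices with positive labels has no isolated vertices; $\gamma_{tR}(X)$ is the minimum of $\sum_v f(v)$ over such $f$. The direct product $G\times H$ has vertex set $V(G)\times V(H)$, with $(g,h)(g',h')$ an edge iff $gg'\in E(G)$ and $hh'\in E(H)$. *)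

From mathcomp Require Import all_boot all_order.
Set Implicit Arguments. Unset Strict Implicit. Unset Printing Implicit Defensive.

(* Cycle C_k on vertex set {0,...,k-1}: i ~ j iff j = i+1 mod k or i = j+1 mod k
   (a simple cycle when k >= 3). *)
Definition cycle_rel (k : nat) : rel 'I_k :=
  fun i j => (val j == i.+1 %% k) || (val i == j.+1 %% k).

(* Complete bipartite graph K_{t,t}: vertices (side, index), adjacent iff on
   different sides. *)
Definition Ktt_rel (t : nat) : rel (bool * 'I_t) :=
  fun x y => x.1 != y.1.

(* Prism P_{C_k} = C_k [] K_2 : vertices (cycle vertex, copy). *)
Definition prism_rel (k : nat) : rel ('I_k * bool) :=
  fun x y => ((x.2 == y.2) && cycle_rel x.1 y.1) || ((x.1 == y.1) && (x.2 != y.2)).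

Definition direct_rel (V W : finType) (e1 : rel V) (e2 : rel W) : rel (V * W) :=
  fun x y => e1 x.1 y.1 && e2 x.2 y.2.

Definition is_TRDF (V : finType) (e : rel V) (f : {ffun V -> 'I_3}) : bool :=
  [forall v, (val (f v) == 0) ==> [exists u, e v u && (val (f u) == 2)]] &&
  [forall v, (val (f v) != 0) ==> [exists u, e v u && (val (f u) != 0)]].

Definition weight (V : finType) (f : {ffun V -> 'I_3}) : nat := \sum_(v : V) val (f v).

(* The default value 2*|V| is the weight of
   the constant-2 function, which is a TRDF whenever the graph has no isolated
   vertices, so the default never matters for such graphs. *)
Definition gamma_tR (V : finType) (e : rel V) : nat :=
  \big[minn/(2 * #|V|)%N]_(f : {ffun V -> 'I_3} | is_TRDF e f) weight f.

From mathcomp Require Import all_boot all_order zify.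
Set Implicit Arguments. Unset Strict Implicit. Unset Printing Implicit Defensive.
Import Order.TTheory.

(* For a graph of maximum degree D >= 2, double counting gives
   2|V| <= D w(f) for every total Roman dominating function f: each vertex
   labelled 0 sees a vertex labelled 2, and each vertex labelled 2 has a
   positive neighbour, hence at most D - 1 neighbours labelled 0.  Conversely
   a total dominating set S yields the function 2 * 1_S of weight 2|S|, so
   gamma_tR = 2|S| = 2|V|/D as soon as D|S| = |V|.  Such sets multiply under
   the direct product, and C_{4k}, K_{t,t} and the prism over C_{3r} have one:
   the vertices i with i mod 4 in {0, 1}, one vertex on each side, and both
   copies of the vertices i with i mod 3 = 0. *)

Lemma sum_nat_indicator (T : finType) (P : pred T) :
  \sum_(x : T) (P x : nat) = #|[set x | P x]|.
Proof. by rewrite -[RHS]muln1 -sum_nat_cond_const [RHS]big_mkcond. Qed.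

Lemma card_le_sum_covering (T : finType) (e : rel T) (A B : {set T}) :
  {in A, forall u, exists2 v, v \in B & e v u} ->
  #|A| <= \sum_(v in B) #|[set u in A | e v u]|.
Proof.
move=> cover; rewrite -sum1_card.
under [X in _ <= X]eq_bigr => v _ do
  rewrite -[#|_|]muln1 -sum_nat_cond_const big_mkcondr.
rewrite exchange_big; apply: leq_sum => u /cover[v vB evu].
by rewrite (bigD1 v) //= evu leq_addr.
Qed.

Lemma card_nbhd_le_size (T : finType) (e : rel T) (v : T) (s : seq T) :
  (forall u, e v u -> u \in s) -> #|e v| <= size s.
Proof.
by move=> sub; apply: leq_trans (card_size s); apply/subset_leq_card/subsetP.
Qed.

Section TotalRomanDomination.

Variable V : finType.
Implicit Types (e : rel V) (f : {ffun V -> 'I_3}) (S : {set V}).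

Lemma gamma_tR_le_weight e f : is_TRDF e f -> gamma_tR e <= weight f.
Proof. exact: (@bigmin_le_cond _ nat). Qed.

Lemma leq_gamma_tR e k :
  k <= 2 * #|V| -> (forall f, is_TRDF e f -> k <= weight f) -> k <= gamma_tR e.
Proof. exact: (@le_bigmin _ nat). Qed.

Definition label_set f (i : nat) : {set V} := [set v | val (f v) == i].

Lemma weight_label_sets f : weight f = #|label_set f 1| + 2 * #|label_set f 2|.
Proof.
rewrite -!sum_nat_indicator big_distrr -big_split; apply: eq_bigr => v _.
by case: (f v) => -[|[|[|]]].
Qed.

Lemma card_label_sets f :
  #|V| = #|label_set f 0| + #|label_set f 1| + #|label_set f 2|.
Proof.
rewrite -!sum_nat_indicator -!big_split -sum1_card; apply: eq_bigr => v _.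
by case: (f v) => -[|[|[|]]].
Qed.

Lemma card_label0_le_label2 e D f :
  symmetric e -> (forall v, #|e v| <= D) -> is_TRDF e f ->
  #|label_set f 0| <= #|label_set f 2| * (D - 1).
Proof.
move=> esym deg /andP[/forallP dom0 /forallP dom_pos].
rewrite -sum_nat_const.
apply: (leq_trans (card_le_sum_covering (e := e) (B := label_set f 2) _)).
  move=> u; rewrite inE => /(implyP (dom0 u))/existsP[v /andP[euv fv]].
  by exists v; rewrite 1?esym // inE.
apply: leq_sum => v; rewrite inE => /eqP fv2.
have /existsP[w /andP[evw fw]] : [exists w, e v w && (val (f w) != 0)].
  by apply: (implyP (dom_pos v)); rewrite fv2.
have sub : [set u in label_set f 0 | e v u] \subset [set u | e v u] :\ w.
  apply/subsetP => u; rewrite !inE => /andP[/eqP fu ->]; rewrite andbT.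
  by apply: contraTneq fw => <-; rewrite fu.
apply: leq_trans (subset_leq_card sub) _.
by move: (cardsD1 w [set u | e v u]) (deg v); rewrite !inE evw cardsE; lia.
Qed.

Lemma TRDF_weight_lower_bound e D f :
  symmetric e -> 1 < D -> (forall v, #|e v| <= D) -> is_TRDF e f ->
  2 * #|V| <= D * weight f.
Proof.
move=> esym D1 deg fT; have := card_label0_le_label2 esym deg fT.
rewrite (card_label_sets f) weight_label_sets; nia.
Qed.

Definition total_dominating e S := forall v, exists2 u, e v u & u \in S.

Definition double_indicator S : {ffun V -> 'I_3} :=
  [ffun v => if v \in S then ord_max else ord0].

Lemma double_indicator_TRDF e S :
  total_dominating e S -> is_TRDF e (double_indicator S).
Proof.
move=> dom; apply/andP; split; apply/forallP => v; apply/implyP => _;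
  have [u evu uS] := dom v; apply/existsP; exists u; by rewrite evu ffunE uS.
Qed.

Lemma weight_double_indicator S : weight (double_indicator S) = 2 * #|S|.
Proof.
rewrite /weight (eq_bigr (fun v => if v \in S then 2 else 0)) => [|v _].
  by rewrite -big_mkcond sum_nat_const mulnC.
by rewrite ffunE; case: (v \in S).
Qed.

(* By the lower bound, a total dominating set in a graph of maximum degree D
   has at least |V|/D vertices; a total perfect code attains this. *)
Definition total_perfect_code e D S :=
  [/\ symmetric e, forall v, #|e v| <= D, total_dominating e S & D * #|S| = #|V|].

Lemma gamma_tR_total_perfect_code e D S :
  1 < D -> total_perfect_code e D S -> gamma_tR e = 2 * #|S|.
Proof.
move=> D1 [esym deg dom cardS]; apply/eqP; rewrite eqn_leq.
rewrite -{1}(weight_double_indicator S) gamma_tR_le_weight ?double_indicator_TRDF //=.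
apply: leq_gamma_tR => [|f fT]; first by rewrite leq_mul2l max_card.
have := TRDF_weight_lower_bound esym D1 deg fT.
by rewrite -cardS mulnCA leq_pmul2l // ltnW.
Qed.

End TotalRomanDomination.

Lemma total_perfect_code_direct (V W : finType) (e1 : rel V) (e2 : rel W)
    D1 D2 (S1 : {set V}) (S2 : {set W}) :
  total_perfect_code e1 D1 S1 -> total_perfect_code e2 D2 S2 ->
  total_perfect_code (direct_rel e1 e2) (D1 * D2) (setX S1 S2).
Proof.
move=> [sym1 deg1 dom1 card1] [sym2 deg2 dom2 card2]; split.
- by move=> x y; rewrite /direct_rel sym1 sym2.
- move=> [v w]; apply: leq_trans (_ : #|setX [set u | e1 v u] [set u | e2 w u]| <= _).
    by apply/subset_leq_card/subsetP => q; rewrite !inE.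
  by rewrite cardsX !cardsE leq_mul.
- move=> [v w]; have [u e1vu uS1] := dom1 v; have [x e2wx xS2] := dom2 w.
  by exists (u, x); rewrite /direct_rel ?inE /= ?e1vu ?uS1.
- by rewrite cardsX card_prod mulnACA card1 card2.
Qed.

Lemma gamma_tR_direct (V W : finType) (e1 : rel V) (e2 : rel W)
    D1 D2 (S1 : {set V}) (S2 : {set W}) :
  1 < D1 * D2 -> total_perfect_code e1 D1 S1 -> total_perfect_code e2 D2 S2 ->
  gamma_tR (direct_rel e1 e2) = 2 * (#|S1| * #|S2|).
Proof.
move=> D12 C1 C2.
by rewrite (gamma_tR_total_perfect_code D12 (total_perfect_code_direct C1 C2)) cardsX.
Qed.

Lemma card_ord_count k (P : pred nat) : #|[set i : 'I_k | P i]| = count P (iota 0 k).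
Proof.
rewrite cardE /enum_mem size_filter -enumT -val_enum_ord count_map.
by apply: eq_count => i; rewrite /= inE.
Qed.

Lemma count_iota_modn p a (P : pred nat) :
  count (fun i => P (i %% p)) (iota 0 (a * p)) = a * count P (iota 0 p).
Proof.
elim: a => [|a IHa] //; rewrite mulSnr iotaD count_cat IHa add0n mulSnr.
rewrite -[in iota (a * p) p](addn0 (a * p)) iotaDl count_map.
congr (_ + _); apply: eq_in_count => i; rewrite mem_iota /= => ip.
by rewrite modnMDl modn_small.
Qed.

Lemma card_ord_modn (P : pred nat) k p : p %| k ->
  #|[set i : 'I_k | P (i %% p)]| = k %/ p * count P (iota 0 p).
Proof.
move=> /dvdnP[a ->]; rewrite (card_ord_count _ (fun i => P (i %% p))) count_iota_modn.
by case: p => [|p]; rewrite ?muln0 ?mulnK.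
Qed.

Lemma cycle_relE k (i j : 'I_k) : cycle_rel i j = (j == ordS i) || (j == ord_pred i).
Proof.
congr (_ || _); apply/eqP/eqP => [ij|->]; last by rewrite -{1}(ord_predK i).
by rewrite -(ordSK j); congr ord_pred; apply: val_inj.
Qed.

Lemma cycle_sym k : symmetric (@cycle_rel k).
Proof. by move=> i j; rewrite /cycle_rel orbC. Qed.

Lemma card_cycle_nbhd k (i : 'I_k) : #|cycle_rel i| <= 2.
Proof.
by apply: (card_nbhd_le_size (s := [:: ordS i; ord_pred i])) => j; rewrite cycle_relE !inE.
Qed.

Lemma val_ord_pred k (i : 'I_k) : 0 < i -> val (ord_pred i) = i.-1.
Proof. by case: i => [[|i] //= ik] _; rewrite modnDr modn_small // ltnW. Qed.

Definition cycle_code k : {set 'I_k} := [set i : 'I_k | i %% 4 < 2].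

Lemma cycle_code_total_perfect k :
  4 %| k -> total_perfect_code (@cycle_rel k) 2 (cycle_code k).
Proof.
move=> k4; split.
- exact: cycle_sym.
- exact: card_cycle_nbhd.
- move=> i; rewrite /cycle_code.
  have [i12 | i03] := boolP ((i %% 4 == 1) || (i %% 4 == 2)).
    have i0 : 0 < i by move: i12; lia.
    exists (ord_pred i); first by rewrite cycle_relE eqxx orbT.
    by rewrite inE val_ord_pred //; lia.
  exists (ordS i); first by rewrite cycle_relE eqxx.
  by rewrite inE /= modn_dvdm //; lia.
- by rewrite card_ord (card_ord_modn (fun j => j < 2) k4) /=; lia.
Qed.

Lemma Ktt_sym t : symmetric (@Ktt_rel t).
Proof. by move=> x y; rewrite /Ktt_rel eq_sym. Qed.

Definition Ktt_code t (i0 : 'I_t) : {set bool * 'I_t} := setX [set: bool] [set i0].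

Lemma Ktt_code_total_perfect t (i0 : 'I_t) :
  total_perfect_code (@Ktt_rel t) t (Ktt_code i0).
Proof.
split.
- exact: Ktt_sym.
- move=> [b i].
  apply: leq_trans (card_nbhd_le_size (s := [seq (~~ b, j) | j <- enum 'I_t]) _) _.
    move=> [c j]; rewrite /Ktt_rel /= => bc.
    by apply/mapP; exists j; rewrite ?mem_enum //; case: b c bc => -[].
  by rewrite size_map size_enum_ord.
- by move=> [b i]; exists (~~ b, i0); rewrite /Ktt_rel ?inE /=; case: b.
- by rewrite cardsX cardsT cards1 card_prod card_bool card_ord mulnC.
Qed.

Lemma prism_sym k : symmetric (@prism_rel k).
Proof. by move=> [i b] [j c]; rewrite /prism_rel /= cycle_sym (eq_sym b) (eq_sym i). Qed.

Lemma card_prism_nbhd k (x : 'I_k * bool) : #|prism_rel x| <= 3.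
Proof.
case: x => i b.
apply: (card_nbhd_le_size (s := [:: (ordS i, b); (ord_pred i, b); (i, ~~ b)])).
move=> [j c]; rewrite /prism_rel cycle_relE !inE /= !xpair_eqE (eq_sym i).
by case: b c => -[]; case: (j == ordS i); case: (j == ord_pred i); case: (j == i).
Qed.

Definition prism_code k : {set 'I_k * bool} :=
  setX [set i : 'I_k | i %% 3 == 0] [set: bool].

Lemma prism_code_total_perfect k :
  3 %| k -> total_perfect_code (@prism_rel k) 3 (prism_code k).
Proof.
move=> k3; split.
- exact: prism_sym.
- exact: card_prism_nbhd.
- move=> [i b]; rewrite /prism_rel.
  have [i0 | i12] := boolP (i %% 3 == 0).
    by exists (i, ~~ b); rewrite ?eqxx ?inE ?i0 //=; case: b.
  have [i1 | i2] := boolP (i %% 3 == 1).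
    have i_gt0 : 0 < i by move: i1; lia.
    exists (ord_pred i, b); first by rewrite /= cycle_relE !eqxx orbT.
    by rewrite !inE val_ord_pred //; lia.
  exists (ordS i, b); first by rewrite /= cycle_relE !eqxx.
  by rewrite !inE /= modn_dvdm //; lia.
- rewrite cardsX cardsT (card_ord_modn (pred1 0) k3) card_prod card_ord card_bool /=.
  by move: k3 => /dvdnP[a ->]; rewrite mulnK //; lia.
Qed.

Theorem corollary4p6 (m n t r : nat) :
  0 < m -> 0 < n -> 4 %| m -> 4 %| n -> 2 <= t -> 1 <= r ->
  [/\ gamma_tR (direct_rel (@cycle_rel m) (@cycle_rel n)) = (m * n) %/ 2,
      gamma_tR (direct_rel (@cycle_rel m) (@Ktt_rel t)) = 2 * m,
      gamma_tR (direct_rel (@cycle_rel m) (@prism_rel (3 * r))) = 2 * m * r &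
      gamma_tR (direct_rel (@Ktt_rel t) (@prism_rel (3 * r))) = 8 * r].
Proof.
move=> _ _ m4 n4 t2 _; case: t t2 => // t _.
have Cm := cycle_code_total_perfect m4; have Cn := cycle_code_total_perfect n4.
have K := Ktt_code_total_perfect (@ord0 t).
have P := prism_code_total_perfect (dvdn_mulr r (dvdnn 3)).
have [_ _ _ cardCm] := Cm; have [_ _ _ cardCn] := Cn; have [_ _ _ cardP] := P.
have cardK : #|Ktt_code (@ord0 t)| = 2 by rewrite cardsX cardsT cards1 card_bool.
rewrite card_ord in cardCm; rewrite card_ord in cardCn.
rewrite card_prod card_ord card_bool in cardP.
split.
- rewrite (gamma_tR_direct _ Cm Cn) // -[m in RHS]cardCm -[n in RHS]cardCn.
  by rewrite mulnACA -mulnA mulKn.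
- by rewrite (gamma_tR_direct _ Cm K) ?cardK; lia.
- by rewrite (gamma_tR_direct _ Cm P); lia.
- by rewrite (gamma_tR_direct _ K P) ?cardK; lia.
Qed.
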